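(* Let $M_1,M_2$ be binary matroids with common triangle $T=E(M_1)\cap E(M_2)$, where $T$ contains no cocircuit of $M_1$ or of $M_2$, and let $M=M_1\oplus_3M_2$. Then: (i) every cocircuit $C^*$ of $M$ is either a cocircuit of $M_1$ or of $M_2$ disjoint from $T$, or is of the form $C_1^*\triangle C_2^*$ where $C_i^*$ is a cocircuit of $M_i$ ($i=1,2$) and $C_1^*\cap T=C_2^*\cap T$ has exactly two elements; (ii) every cocircuit of $M_1$ or of $M_2$ disjoint from $T$ is a cocircuit of $M$; and if $C_i^*$ is a cocircuit of $M_i$ ($i=1,2$) with $C_1^*\cap T=C_2^*\cap T$ of size exactly two, then either $C_1^*\triangle C_2^*$ is a cocircuit of $M$, or $C_1^*\triangle C_2^*$ is the disjoint union of two cocircuits $R^*,Q^*$ of $M$, each of which meets both $E(M_1)$ and $E(M_2)$.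
   Context: If $M_1,M_2$ are binary matroids on $E_1,E_2$ with $E_1\cap E_2=T$ and $T$ a triangle of both, $P_T(M_1,M_2)$ denotes the generalized parallel connection across $T$: the matroid on $E_1\cup E_2$ whose flats are exactly the sets $F$ such that $F\cap E_i$ is a flat of $M_i$ for $i=1,2$. The 3-sum is $M_1\oplus_3 M_2=P_T(M_1,M_2)\setminus T$. $\triangle$ denotes symmetric difference. *)

From HB Require Import structures.
From mathcomp Require Import all_boot all_order all_algebra.
Set Implicit Arguments. Unset Strict Implicit. Unset Printing Implicit Defensive.
Import GRing.Theory.

Record matroid (U : finType) := Matroid {
  ground : {set U};
  indep : {set U} -> bool;
  indep_ground : forall I, indep I -> I \subset ground;
  indep0 : indep set0;
  indep_sub : forall I J : {set U}, J \subset I -> indep I -> indep J;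
  indep_aug : forall I J : {set U}, indep I -> indep J -> #|I| < #|J| ->
                exists2 x, x \in J :\: I & indep (x |: I)
}.

Section Matroids.
Variable U : finType.
Implicit Types (M : matroid U) (X Y B C F : {set U}).

Definition symdiff X Y : {set U} := (X :\: Y) :|: (Y :\: X).

Definition basis M B : bool :=
  indep M B && [forall I : {set U}, (indep M I && (B \subset I)) ==> (I == B)].

Definition circuit M C : bool :=
  [&& C \subset ground M, ~~ indep M C &
      [forall D : {set U}, (D \proper C) ==> indep M D]].

(* independent sets of the dual matroid M^* : subsets of the ground set
   avoiding some basis of M *)
Definition coindep M X : bool :=
  (X \subset ground M) && [exists B : {set U}, basis M B && [disjoint X & B]].

Definition cocircuit M C : bool :=
  [&& C \subset ground M, ~~ coindep M C &
      [forall D : {set U}, (D \proper C) ==> coindep M D]].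

Definition rank M X : nat :=
  \max_(I : {set U} | (I \subset X) && indep M I) #|I|.

Definition flat M F : bool :=
  (F \subset ground M) &&
  [forall x in ground M :\: F, rank M F < rank M (x |: F)].

Definition triangle M T : bool := circuit M T && (#|T| == 3).

Definition binary M : Prop :=
  exists (n : nat) (f : U -> 'rV['F_2]_n),
    forall X, indep M X = (X \subset ground M) && free [seq f x | x <- enum X].

Section Delete.
Variables (M : matroid U) (X : {set U}).
Let dind (I : {set U}) := indep M I && (I \subset ground M :\: X).
Lemma del_ground (I : {set U}) : dind I -> I \subset ground M :\: X.
Proof. by move=> /andP[]. Qed.
Lemma del0 : dind set0.
Proof. by rewrite /dind indep0 sub0set. Qed.
Lemma del_sub (I J : {set U}) : J \subset I -> dind I -> dind J.
Proof.
move=> sJI /andP[iI sI]; rewrite /dind (indep_sub sJI iI) /=.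
exact: subset_trans sJI sI.
Qed.
Lemma del_aug (I J : {set U}) : dind I -> dind J -> #|I| < #|J| ->
  exists2 x, x \in J :\: I & dind (x |: I).
Proof.
move=> /andP[iI sI] /andP[iJ sJ] lt.
have [x xJI ix] := indep_aug iI iJ lt; exists x => //.
rewrite /dind ix /= subUset sI andbT sub1set.
by move: xJI; rewrite in_setD => /andP[_ /(subsetP sJ)].
Qed.
Definition delete : matroid U := Matroid del_ground del0 del_sub del_aug.
End Delete.

Definition is_gen_par_conn (M1 M2 : matroid U) (T : {set U}) (P : matroid U) : Prop :=
  ground P = ground M1 :|: ground M2 /\
  forall F, flat P F <->
    [/\ F \subset ground M1 :|: ground M2,
        flat M1 (F :&: ground M1) & flat M2 (F :&: ground M2)].

Definition three_sum (P : matroid U) (T : {set U}) : matroid U := delete P T.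

End Matroids.

(* A binary matroid with representation [f] over GF(2) has as cocycle space the
   supports [{e | f e * w <> 0}] of linear forms [w]: a set is coindependent iff it
   contains no nonempty cocycle, and the cocircuits are the minimal nonempty
   cocycles.  Through the flats of [P_T(M1, M2)], the cocycles of the 3-sum are
   exactly the sets [(D1 :|: D2) :\: T] with [Di] a cocycle of [Mi] and
   [D1 :&: T = D2 :&: T].  A cocycle meets the triangle [T] in an even set and,
   as [T] contains no cocircuit, no nonempty cocycle lies inside [T]; so the traces
   on [T] form a space of dimension 2, and a cocycle lying below a cocircuit that
   meets [T] is determined by its trace.  Hence a minimal glued set is a cocircuit
   of one side avoiding [T] or some [symdiff C1 C2] with two-element traces, and the
   only glued sets below [symdiff C1 C2] are [set0], itself, and at most one
   complementary pair [R], [Q], which are then cocircuits. *)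

From HB Require Import structures.
From mathcomp Require Import all_boot all_order all_algebra.
From Stdlib Require Import Classical.

Set Implicit Arguments.
Unset Strict Implicit.
Unset Printing Implicit Defensive.
Import GRing.Theory.

Section F2Vectors.
Local Open Scope ring_scope.
Variable n : nat.
Implicit Types (u v : 'rV['F_2]_n) (w : 'cV['F_2]_n) (s : seq 'rV['F_2]_n).

Lemma F2_cases (x : 'F_2) : x = 0 \/ x = 1.
Proof. by case: x => [[|[|//]]] i; [left|right]; apply/val_inj. Qed.

Lemma F2_addrr (x : 'F_2) : x + x = 0.
Proof. by case: (F2_cases x) => ->; apply/val_inj. Qed.

Lemma F2_addr_neq0 (x y : 'F_2) : (x + y != 0) = (x != 0) (+) (y != 0).
Proof. by case: (F2_cases x) (F2_cases y) => -> [] ->; rewrite ?addr0 ?add0r ?F2_addrr. Qed.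

Lemma F2_addvv v : v + v = 0.
Proof. by apply/rowP => i; rewrite !mxE F2_addrr. Qed.

Definition dot u w : 'F_2 := (u *m w) 0 0.

Lemma dotDl u v w : dot (u + v) w = dot u w + dot v w.
Proof. by rewrite /dot mulmxDl mxE. Qed.

Lemma dotDr u w w' : dot u (w + w') = dot u w + dot u w'.
Proof. by rewrite /dot mulmxDr mxE. Qed.

Lemma dotv0 u : dot u 0 = 0.
Proof. by rewrite /dot mulmx0 mxE. Qed.

Lemma dot_span_eq0 s u w :
  u \in <<s>>%VS -> {in s, forall v, dot v w = 0} -> dot u w = 0.
Proof.
rewrite -{1}[s]in_tupleE => /coord_span -> s_w.
rewrite /dot mulmx_suml summxE big1 // => i _.
rewrite -scalemxAl mxE; have -> : (((in_tuple s)`_i) *m w) 0 0 = 0 by apply: s_w; rewrite mem_nth.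
by rewrite mulr0.
Qed.

(* [w] is a column of the cokernel of the matrix whose rows are [s]. *)
Lemma separating_dot s v :
  v \notin <<s>>%VS -> exists w, {in s, forall u, dot u w = 0} /\ dot v w != 0.
Proof.
move=> v_s; pose A := \matrix_(i < size s) s`_i.
have /rV0Pn[j vAj] : v *m cokermx A != 0.
  rewrite -submxE; apply: contra v_s => /submxP[D ->].
  rewrite mulmx_sum_row; apply: memv_suml => i _; apply: memvZ.
  by apply: memv_span; rewrite rowK mem_nth.
exists (col j (cokermx A)); split; last by rewrite /dot colE mulmxA -colE mxE.
move=> _ /(nthP 0)[i lt_i <-].
have := congr1 (fun B : 'M_(size s, n) => B (Ordinal lt_i) j) (mulmx_coker A).
rewrite [LHS]mxE [RHS]mxE => <-; rewrite /dot mxE.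
by apply: eq_bigr => k _; rewrite !mxE.
Qed.
End F2Vectors.

Lemma card3_split (U : finType) (T : {set U}) x : #|T| = 3 -> x \in T ->
  exists p q, [/\ T = [set x; p; q], x != p, x != q & p != q].
Proof.
move=> cardT xT; have /cards2P[p [q [pq eTx]]] : #|T :\ x| == 2.
  by rewrite (cardsD1 x) xT add1n in cardT; case: cardT => ->.
have [pTx qTx] : p \in T :\ x /\ q \in T :\ x by rewrite eTx !inE !eqxx ?orbT.
exists p, q; split => //; rewrite 1?eq_sym.
- by rewrite -(setD1K xT) eTx setUA.
- by case/setD1P: pTx.
by case/setD1P: qTx.
Qed.

Section MatroidBasics.
Variable U : finType.
Implicit Types (N : matroid U) (X Y I J B F : {set U}).

Lemma leq_card_rank N I X : indep N I -> I \subset X -> #|I| <= rank N X.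
Proof.
move=> iI sIX.
by apply: (@leq_bigmax_cond _ (fun I => (I \subset X) && indep N I)); rewrite sIX.
Qed.

Lemma rank_attained N X : exists2 I, indep N I && (I \subset X) & rank N X = #|I|.
Proof.
have : 0 < #|[pred I : {set U} | (I \subset X) && indep N I]|.
  by apply/card_gt0P; exists set0; rewrite inE sub0set indep0.
move=> /(eq_bigmax_cond (fun I : {set U} => #|I|))[I]; rewrite inE andbC => iI eI.
by exists I; rewrite // /rank -eI.
Qed.

Lemma leq_card_basis N B J : basis N B -> indep N J -> #|J| <= #|B|.
Proof.
move=> /andP[iB /forallP maxB] iJ; rewrite leqNgt; apply/negP => ltBJ.
have [x /setDP[_ xB] ixB] := indep_aug iB iJ ltBJ.
have /implyP/(_ _)/eqP eB := maxB (x |: B).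
by move: xB; rewrite -eB ?ixB ?subsetUr ?setU11.
Qed.

Lemma maximal_indep_sub N Y : exists2 B, indep N B && (B \subset Y) &
  forall e, e \in Y -> e \notin B -> ~~ indep N (e |: B).
Proof.
have [B /andP[iB sBY] rB] := rank_attained N Y.
exists B => [|e eY eB]; first by rewrite iB.
apply/negP => ieB; have := @leq_card_rank N _ Y ieB.
by rewrite subUset sub1set eY sBY cardsU1 eB -rB ltnn => /(_ isT).
Qed.

(* For independent [I], [cl N I] is the closure of [I]. *)
Definition cl N I := I :|: [set e in ground N | ~~ indep N (e |: I)].

Lemma cl_flat N I : indep N I -> flat N (cl N I).
Proof.
move=> iI; have sI := indep_ground iI.
rewrite /flat; apply/andP; split.
  by rewrite subUset sI; apply/subsetP => e; rewrite inE => /andP[].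
apply/forallP => x; apply/implyP => /setDP[xg].
rewrite in_setU inE negb_or xg negbK => /andP[xI ixI].
have [J /andP[iJ sJ] ->] := rank_attained N (cl N I).
have ltJI : #|J| <= #|I|.
  rewrite leqNgt; apply/negP => ltIJ.
  have [y /setDP[yJ yI] iyI] := indep_aug iI iJ ltIJ.
  by move: (subsetP sJ y yJ); rewrite !inE (negbTE yI) iyI andbF.
apply: leq_ltn_trans ltJI _; have -> : #|I|.+1 = #|x |: I| by rewrite cardsU1 xI.
by apply: leq_card_rank ixI _; apply: setUS; rewrite subsetUl.
Qed.

Lemma cl_basis N B : indep N B -> ground N \subset cl N B -> basis N B.
Proof.
move=> iB sEcl; rewrite /basis iB; apply/forallP => J.
apply/implyP => /andP[iJ sBJ]; rewrite eqEsubset sBJ andbT.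
apply/subsetP => e eJ; apply/negPn/negP => eB.
have := subsetP sEcl e (subsetP (indep_ground iJ) e eJ).
by rewrite !inE (negbTE eB) (@indep_sub _ N J) ?andbF // subUset sub1set eJ.
Qed.

Lemma flat_basis_ground N B F : basis N B -> flat N F -> B \subset F -> F = ground N.
Proof.
move=> bB /andP[sF /forallP flatF] sBF; apply/eqP; rewrite eqEsubset sF.
apply/subsetP => x xg; apply/negPn/negP => xF.
have := flatF x; rewrite inE xF xg /=.
have [J /andP[iJ _] ->] := rank_attained N (x |: F).
have := leq_card_rank (proj1 (andP bB)) sBF.
by move=> /(leq_trans (leq_card_basis bB iJ)); rewrite leqNgt => /negbTE->.
Qed.

Lemma spanning_flatP N Y : Y \subset ground N ->
  (exists2 B, basis N B & B \subset Y) <->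
  (forall F, flat N F -> Y \subset F -> F = ground N).
Proof.
move=> sY; split=> [[B bB sBY] F fF sYF|spanY].
  exact: flat_basis_ground bB fF (subset_trans sBY sYF).
have [B /andP[iB sBY] maxB] := maximal_indep_sub N Y.
exists B => //; apply: (cl_basis iB); rewrite (spanY _ (cl_flat iB)) //.
apply/subsetP => e eY; rewrite inE; case eB: (e \in B) => //=.
by rewrite inE (subsetP sY) // maxB ?eB.
Qed.

Lemma coindep_flatP N X : X \subset ground N ->
  coindep N X <-> forall F, flat N F -> ground N :\: X \subset F -> F = ground N.
Proof.
move=> sX; rewrite -spanning_flatP ?subsetDl // /coindep sX.
split=> [/existsP[B /andP[bB dXB]]|[B bB]].
  by exists B; rewrite // subsetD (indep_ground (proj1 (andP bB))) disjoint_sym.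
by rewrite subsetD disjoint_sym => /andP[_ dBX]; apply/existsP; exists B; rewrite bB.
Qed.

(* The first hypothesis says that [ground P :\: T] spans [P], so that the bases
   of [delete P T] are bases of [P]. *)
Lemma coindep_deleteP (P : matroid U) T X :
  (forall F, flat P F -> ground P :\: T \subset F -> F = ground P) ->
  X \subset ground P :\: T ->
  coindep (delete P T) X <->
    forall F, flat P F -> (ground P :\: T) :\: X \subset F -> F = ground P.
Proof.
move=> spanPT sX.
have sY : (ground P :\: T) :\: X \subset ground P by rewrite setDDl subsetDl.
rewrite -spanning_flatP // /coindep sX /=.
split=> [/existsP[B /andP[/andP[/andP[iB sB] maxB] dXB]]|[B bB]].
  exists B; last by rewrite subsetD sB disjoint_sym.
  apply: (cl_basis iB); rewrite (spanPT _ (cl_flat iB)) //.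
  apply/subsetP => e eET; rewrite inE; case eB: (e \in B) => //=.
  rewrite inE (subsetP (subsetDl _ T)) //=; apply/negP => ieB.
  have /implyP := forallP maxB (e |: B).
  rewrite /= ieB subUset sub1set eET sB subsetUr => /(_ isT)/eqP eeB.
  by move: eB; rewrite -eeB setU11.
rewrite subsetD => /andP[sB dBX]; apply/existsP; exists B.
rewrite disjoint_sym dBX andbT /basis /= sB.
case/andP: bB => -> maxB; apply/forallP => J; apply/implyP => /andP[/andP[iJ _] sBJ].
by have /implyP := forallP maxB J; rewrite iJ sBJ; apply.
Qed.
End MatroidBasics.

Section MinimalMembers.
Variable U : finType.
Implicit Types (K : {set U} -> Prop) (X Y C D : {set U}).

Definition min_nonempty K C :=
  [/\ K C, C != set0 & forall D, K D -> D != set0 -> D \subset C -> D = C].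

Lemma not_min_nonempty K C : K C -> C != set0 -> ~ min_nonempty K C ->
  exists D, [/\ K D, D != set0 & D \proper C].
Proof.
move=> KC nC notmin; apply: NNPP => noD; apply: notmin; split=> // D KD nD sDC.
by apply: NNPP => neDC; apply: noD; exists D; rewrite properEneq sDC andbT; split=> //; apply/eqP.
Qed.

Lemma min_nonempty_sub K D : K D -> D != set0 ->
  exists2 C, min_nonempty K C & C \subset D.
Proof.
move: {2}#|D|.+1 (ltnSn #|D|) => m; elim: m D => // m IHm D leDm KD nD.
have [minD|/(not_min_nonempty KD nD)[D' [KD' nD' ltD']]] := classic (min_nonempty K D).
  by exists D.
have [C minC sCD'] := IHm D' (leq_trans (proper_card ltD') leDm) KD' nD'.
by exists C => //; apply: subset_trans sCD' (proper_sub ltD').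
Qed.

Lemma min_nonempty_equiv K K' C : (forall X, K X <-> K' X) ->
  min_nonempty K C -> min_nonempty K' C.
Proof. by move=> KK' [/KK' KC nC minC]; split=> // D /KK'; apply: minC. Qed.



Lemma setD_symdiff X Y : Y \subset X -> symdiff X Y = X :\: Y.
Proof.
move=> sYX; apply/setP => z; rewrite !inE.
by case: (boolP (z \in Y)) => [zY|]; rewrite ?(subsetP sYX z zY) ?andbF ?orbF.
Qed.

Lemma min_nonempty_cover K D x : (forall X Y, K X -> K Y -> K (symdiff X Y)) ->
  K D -> x \in D -> exists C, [/\ min_nonempty K C, C \subset D & x \in C].
Proof.
move=> KsD; move: {2}#|D|.+1 (ltnSn #|D|) => m.
elim: m D => // m IHm D leDm KD xD.
have [C0 minC0 sC0D] : exists2 C0, min_nonempty K C0 & C0 \subset D.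
  by apply: min_nonempty_sub KD _; apply/set0Pn; exists x.
case xC0: (x \in C0); first by exists C0.
case: minC0 => KC0 /set0Pn[y yC0] _.
have ltD' : D :\: C0 \proper D.
  by apply/properP; split; [apply: subsetDl | exists y; rewrite ?inE ?yC0 ?(subsetP sC0D)].
have KD' : K (D :\: C0) by rewrite -setD_symdiff //; apply: KsD.
have [|C [minC sCD' xC]] := IHm _ (leq_trans (proper_card ltD') leDm) KD'.
  by rewrite inE xC0.
by exists C; split=> //; apply: subset_trans sCD' (proper_sub ltD').
Qed.

Lemma cocircuit_min_nonempty (N : matroid U) K :
  (forall D, K D -> D \subset ground N) ->
  (forall X, X \subset ground N ->
     coindep N X <-> ~ exists D, [/\ K D, D != set0 & D \subset X]) ->
  forall C, cocircuit N C <-> min_nonempty K C.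
Proof.
move=> sKE coindepP C; split=> [/and3P[sCE dC /forallP coindep_sub]|[KC nC minC]].
  have minC D : K D -> D != set0 -> D \subset C -> D = C.
    move=> KD nD sDC; apply: NNPP => neDC.
    have /implyP := coindep_sub D; rewrite properEneq sDC andbT.
    move=> /(_ (introN eqP neDC))/(coindepP _ (subset_trans sDC sCE)); apply.
    by exists D.
  have [D [KD nD sDC]] : exists D, [/\ K D, D != set0 & D \subset C].
    by apply: NNPP => noD; move/negP: dC; apply; apply/coindepP.
  by have eDC := minC D KD nD sDC; subst D; split.
apply/and3P; split; first exact: sKE.
  by apply/negP => /(coindepP C (sKE C KC)); apply; exists C.
apply/forallP => D; apply/implyP => ltDC.
have sDE := subset_trans (proper_sub ltDC) (sKE C KC).
apply/(coindepP D sDE) => -[D' [KD' nD' sD'D]].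
have eD'C := minC D' KD' nD' (subset_trans sD'D (proper_sub ltDC)).
by move: ltDC; rewrite -eD'C properE sD'D andbF.
Qed.
End MinimalMembers.

Section BinaryMatroid.
Local Open Scope ring_scope.
Variables (U : finType) (M : matroid U) (n : nat) (f : U -> 'rV['F_2]_n).
Hypothesis reprM : forall X, indep M X = (X \subset ground M) && free [seq f x | x <- enum X].
Implicit Types (X Y I F D : {set U}) (w : 'cV['F_2]_n).

Definition fspan X := <<[seq f x | x <- enum X]>>%VS.

Lemma mem_fspan X x : x \in X -> f x \in fspan X.
Proof. by move=> xX; apply/memv_span/map_f; rewrite mem_enum. Qed.

Lemma fspan_subv X (V : {vspace 'rV['F_2]_n}) :
  {in X, forall x, f x \in V} -> (fspan X <= V)%VS.
Proof. by move=> XV; apply/span_subvP => _ /mapP[x + ->]; rewrite mem_enum => /XV. Qed.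

Lemma indep_setU1 I x : indep M I -> x \in ground M -> x \notin I ->
  indep M (x |: I) = (f x \notin fspan I).
Proof.
move=> iI xg xI; move: (iI); rewrite !reprM subUset sub1set xg => /andP[-> frI].
have /perm_map/perm_free-> : perm_eq (enum (x |: I)) (x :: enum I).
  apply: uniq_perm; rewrite /= ?mem_enum ?xI ?enum_uniq // => y.
  by rewrite mem_enum in_cons mem_enum in_setU1.
by rewrite /= free_cons frI andbT.
Qed.

Lemma dim_fspan_indep I : indep M I -> \dim (fspan I) = #|I|.
Proof. by rewrite reprM => /andP[_ /eqP]; rewrite size_map -cardE. Qed.

Lemma dim_fspan X : (\dim (fspan X) <= #|X|)%N.
Proof. by rewrite cardE -(size_map f); apply: dim_span. Qed.

Lemma flat_notin_fspan F e : flat M F -> e \in ground M -> e \notin F ->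
  f e \notin fspan F.
Proof.
move=> flatF eg eF; have /andP[sF /forallP rankF] := flatF.
have [I /andP[iI sIF] rI] := rank_attained M F.
have spanFI : (fspan F <= fspan I)%VS.
  apply: fspan_subv => u uF; case uI: (u \in I); first exact: mem_fspan.
  apply/negPn/negP => fu_I.
  have := @leq_card_rank _ M (u |: I) F.
  rewrite indep_setU1 ?uI ?(subsetP sF) // subUset sub1set uF sIF rI cardsU1 uI.
  by rewrite ltnn => /(_ fu_I isT).
apply/negP => fe_F; have := rankF e; rewrite inE eF eg /=.
have [J /andP[iJ sJ] ->] := rank_attained M (e |: F).
have spanJI : (fspan J <= fspan I)%VS.
  apply: fspan_subv => j /(subsetP sJ); rewrite in_setU1 => /orP[/eqP->|jF].
    exact: (subvP spanFI).
  exact/(subvP spanFI)/mem_fspan.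
have := leq_trans (dimvS spanJI) (dim_fspan I).
by rewrite dim_fspan_indep // rI ltnNge => ->.
Qed.

Definition cocyc w := [set e in ground M | dot (f e) w != 0].

Lemma cocyc_sub w : cocyc w \subset ground M.
Proof. by apply/subsetP => e; rewrite inE => /andP[]. Qed.

Lemma cocyc0 : cocyc 0 = set0.
Proof. by apply/setP => e; rewrite !inE dotv0 eqxx andbF. Qed.

Lemma cocycD w w' : cocyc (w + w') = symdiff (cocyc w) (cocyc w').
Proof.
apply/setP => e; rewrite /symdiff !inE dotDr F2_addr_neq0.
by case: (e \in ground M); case: (dot (f e) w != 0); case: (dot (f e) w' != 0).
Qed.

Definition cocycle D := exists w, D = cocyc w.

Lemma cocycle0 : cocycle set0.
Proof. by exists 0; rewrite cocyc0. Qed.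

Lemma cocycleD X Y : cocycle X -> cocycle Y -> cocycle (symdiff X Y).
Proof. by move=> [w ->] [w' ->]; exists (w + w'); rewrite cocycD. Qed.

Lemma cocycle_sub D : cocycle D -> D \subset ground M.
Proof. by move=> [w ->]; apply: cocyc_sub. Qed.

Lemma flat_setD_cocyc w : flat M (ground M :\: cocyc w).
Proof.
rewrite /flat subsetDl /=; apply/forallP => x; apply/implyP.
rewrite setDDr setDv set0U => /setIP[xg]; rewrite inE xg /= => xw.
have [I /andP[iI sI] rI] := rank_attained M (ground M :\: cocyc w).
have xI : x \notin I by apply/negP => /(subsetP sI); rewrite !inE xg xw.
have fx_I : f x \notin fspan I.
  apply: contra xw => /dot_span_eq0-> // _ /mapP[y + ->].
  by rewrite mem_enum => /(subsetP sI); rewrite !inE => /andP[+ yg]; rewrite yg negbK => /eqP.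
have := @leq_card_rank _ M (x |: I) (x |: (ground M :\: cocyc w)).
by rewrite indep_setU1 // cardsU1 xI rI; apply; rewrite ?setUS.
Qed.

Lemma flat_cocycle_sep F e : flat M F -> e \in ground M -> e \notin F ->
  exists D, [/\ cocycle D, e \in D & D \subset ground M :\: F].
Proof.
move=> flatF eg eF; have [w [F_w e_w]] := separating_dot (flat_notin_fspan flatF eg eF).
exists (cocyc w); split; [by exists w | by rewrite inE eg e_w |].
apply/subsetP => d; rewrite !inE => /andP[dg d_w]; rewrite dg andbT.
by apply: contra d_w => dF; rewrite F_w ?map_f ?mem_enum.
Qed.

Lemma flat_addv_closed F x y z : flat M F -> x \in F -> z \in F -> y \in ground M ->
  f y = f x + f z -> y \in F.
Proof.
move=> flatF xF zF yg fy; apply: contraT => yF.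
by have := flat_notin_fspan flatF yg yF; rewrite fy rpredD ?mem_fspan.
Qed.

Lemma flat_cocycle_sep2 F x y z : flat M F -> x \in ground M -> y \in ground M ->
  x \notin F -> y \notin F -> f y = f x + f z ->
  exists D, [/\ cocycle D, x \in D, y \in D, z \notin D & D \subset ground M :\: F].
Proof.
move=> flatF xg yg xF yF fy.
have fx_zF : f x \notin <<f z :: [seq f u | u <- enum F]>>%VS.
  rewrite span_cons; apply/negP => /memv_addP[_ /vlineP[k ->] [v vF fx]].
  have [k0|k1] := F2_cases k; move: fx; rewrite ?k0 ?k1 ?scale0r ?add0r ?scale1r.
    by move=> fx; have := flat_notin_fspan flatF xg xF; rewrite fx vF.
  move=> fx; have fyv : f y = v by rewrite fy fx addrAC F2_addvv add0r.
  by have := flat_notin_fspan flatF yg yF; rewrite fyv vF.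
have [w [zF_w x_w]] := separating_dot fx_zF.
have z_w : dot (f z) w = 0 by rewrite zF_w ?mem_head.
exists (cocyc w); split; first by exists w.
- by rewrite inE xg x_w.
- by rewrite inE yg fy dotDl z_w addr0 x_w.
- by rewrite inE z_w eqxx andbF.
apply/subsetP => d; rewrite !inE => /andP[dg d_w]; rewrite dg andbT.
by apply: contra d_w => dF; rewrite zF_w // in_cons map_f ?orbT ?mem_enum.
Qed.

Lemma coindep_cocycleP X : X \subset ground M ->
  coindep M X <-> ~ exists D, [/\ cocycle D, D != set0 & D \subset X].
Proof.
move=> sX; rewrite coindep_flatP //.
split=> [flatE [_ [[w ->] /set0Pn[d d_w] sX_w]]|nocyc F flatF sF].
  have := flatE _ (flat_setD_cocyc w) (setDS _ sX_w).
  by move=> /setP/(_ d); rewrite in_setD d_w (subsetP (cocyc_sub w) d d_w).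
apply/eqP; rewrite eqEsubset (proj1 (andP flatF)); apply/subsetP => e eg.
apply: contraT => eF; have [D [cD eD sF_D]] := flat_cocycle_sep flatF eg eF.
case: nocyc; exists D; split => //; first by apply/set0Pn; exists e.
apply/subsetP => d /(subsetP sF_D); rewrite inE => /andP[dF dg].
by apply: contraR dF => dX; rewrite (subsetP sF) // inE dX.
Qed.

Lemma cocircuit_min_cocycle C : cocircuit M C <-> min_nonempty cocycle C.
Proof. exact: cocircuit_min_nonempty cocycle_sub coindep_cocycleP C. Qed.

Lemma fspan1 x : fspan [set x] = <[f x]>%VS.
Proof. by rewrite /fspan enum_set1 span_seq1. Qed.

Lemma triangle_addv T a b c : triangle M T -> T = [set a; b; c] ->
  a != b -> a != c -> b != c -> f c = f a + f b.
Proof.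
move=> /andP[/and3P[sTE depT /forallP minT] _] eT ab ac bc.
have indepT D : D \subset T -> ~~ (T \subset D) -> indep M D.
  by move=> sDT nsTD; have /implyP := minT D; rewrite properE sDT nsTD; apply.
have [aT bT cT] : [/\ a \in T, b \in T & c \in T] by rewrite eT !inE !eqxx ?orbT.
have notin_line x y z : x \in T -> y \in T -> z \in T ->
    x != y -> y != z -> x != z -> f x \notin <[f y]>%VS.
  move=> xT yT zT xy yz xz.
  have iy : indep M [set y].
    by apply: indepT; [rewrite sub1set | apply/subsetPn; exists x; rewrite // inE].
  rewrite -fspan1 -indep_setU1 ?(subsetP sTE) ?inE //.
  apply: indepT; first by rewrite subUset !sub1set xT.
  by apply/subsetPn; exists z; rewrite // !inE negb_or !(eq_sym z) xz yz.
have fc_ab : f c \in (<[f a]> + <[f b]>)%VS.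
  have iab : indep M [set a; b].
    apply: indepT; first by rewrite subUset !sub1set aT.
    by apply/subsetPn; exists c; rewrite // !inE negb_or !(eq_sym c) ac bc.
  have := indep_setU1 iab (subsetP sTE c cT).
  have -> : c |: [set a; b] = T by rewrite eT setUC -setUA setUC.
  rewrite (negbTE depT) !inE negb_or !(eq_sym c) ac bc => /(_ isT)/esym/negbFE.
  apply: (subvP (fspan_subv _)) => x; rewrite !inE => /orP[]/eqP->.
    by have := memv_add (memv_line (f a)) (mem0v <[f b]>%VS); rewrite addr0.
  by have := memv_add (mem0v <[f a]>%VS) (memv_line (f b)); rewrite add0r.
have [k1 [k2 fc]] : exists k1 k2, f c = k1 *: f a + k2 *: f b.
  by move: fc_ab => /memv_addP[_ /vlineP[k1 ->] [_ /vlineP[k2 ->] ->]]; exists k1, k2.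
have ca : f c \notin <[f a]>%VS by apply: (notin_line _ _ b) => //; rewrite eq_sym.
have cb : f c \notin <[f b]>%VS by apply: (notin_line _ _ a) => //; rewrite eq_sym.
case: (F2_cases k1) (F2_cases k2) fc => [] -> [] ->; rewrite ?scale0r ?scale1r ?addr0 ?add0r //.
- by move=> fc; move: ca; rewrite fc mem0v.
- by move=> fc; move: cb; rewrite fc memv_line.
- by move=> fc; move: ca; rewrite fc memv_line.
Qed.

Lemma cocycle_triangle T a b c X : triangle M T -> T = [set a; b; c] ->
  a != b -> a != c -> b != c -> cocycle X -> (c \in X) = (a \in X) (+) (b \in X).
Proof.
move=> triT eT ab ac bc [w ->]; have fc := triangle_addv triT eT ab ac bc.
have /subsetP sTE : T \subset ground M by case/andP: triT => /and3P[].
have [ag bg cg] : [/\ a \in ground M, b \in ground M & c \in ground M].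
  by split; apply: sTE; rewrite eT !inE eqxx ?orbT.
by rewrite !inE ag bg cg fc dotDl F2_addr_neq0.
Qed.

Lemma cocycle_sub_eq0 (T : {set U}) X : (forall C, cocircuit M C -> ~~ (C \subset T)) ->
  cocycle X -> X \subset T -> X = set0.
Proof.
move=> noCT cX sXT; apply/eqP; apply: contraT => nX.
have [C /cocircuit_min_cocycle/noCT/negP nsCT sCX] := min_nonempty_sub cX nX.
by case: nsCT; apply: subset_trans sCX sXT.
Qed.

Lemma flat_eq_ground (T : {set U}) F : (forall C, cocircuit M C -> ~~ (C \subset T)) ->
  flat M F -> ground M :\: T \subset F -> F = ground M.
Proof.
move=> noCT flatF sF; apply/eqP; rewrite eqEsubset (proj1 (andP flatF)).
apply/subsetP => e eg; apply: contraT => eF.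
have [D [cD eD sD]] := flat_cocycle_sep flatF eg eF.
suff D0 : D = set0 by rewrite D0 inE in eD.
apply: cocycle_sub_eq0 noCT cD _; apply/subsetP => d /(subsetP sD).
by rewrite inE => /andP[dF dg]; apply: contraR dF => dT; rewrite (subsetP sF) // inE dT.
Qed.
End BinaryMatroid.

Ltac case_mem :=
  repeat (match goal with |- context [?x \in ?S] => let h := fresh in case h: (x \in S) end);
  rewrite /= ?andbT ?andbF ?orbT ?orbF; intros; try discriminate; try done.

Lemma mem_set_eq (U : finType) (X Y : {set U}) z : X = Y -> (z \in X) = (z \in Y).
Proof. by move->. Qed.

Lemma subset_implyb (U : finType) (X Y : {set U}) z : X \subset Y -> (z \in X) ==> (z \in Y).
Proof. by move=> sXY; apply/implyP/(subsetP sXY). Qed.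

Section TriangleTraces.
Variables (U : finType) (T : {set U}) (a b c : U).
Hypotheses (eT : T = [set a; b; c]) (ab : a != b) (ac : a != c) (bc : b != c).
Implicit Types X Y : {set U}.

(* A cocycle of a binary matroid meets a triangle [[set a; b; c]] in an even set. *)
Definition even_on_tri X := (c \in X) = (a \in X) (+) (b \in X).

Lemma even_on_tri_symdiff X Y :
  even_on_tri X -> even_on_tri Y -> even_on_tri (symdiff X Y).
Proof.
rewrite /even_on_tri /symdiff !inE => -> ->.
by case: (a \in X); case: (b \in X); case: (a \in Y); case: (b \in Y).
Qed.

Lemma even_on_tri_traceP X Y : even_on_tri X -> even_on_tri Y ->
  reflect (X :&: T = Y :&: T) (((a \in X) == (a \in Y)) && ((b \in X) == (b \in Y))).
Proof.
move=> eX eY; apply: (iffP andP) => [[/eqP aXY /eqP bXY]|XYT].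
  apply/setP => z; rewrite !inE eT !inE.
  case: (eqVneq z a) => [->|_]; first by rewrite aXY.
  case: (eqVneq z b) => [->|_]; first by rewrite bXY.
  by case: (eqVneq z c) => [->|_]; rewrite ?eX ?eY ?aXY ?bXY ?andbF.
have [aT bT] : a \in T /\ b \in T by rewrite eT !inE !eqxx ?orbT.
by move: (mem_set_eq a XYT) (mem_set_eq b XYT); rewrite !inE aT bT !andbT => -> ->; rewrite !eqxx.
Qed.

Lemma even_on_tri_trace_eq0 X : even_on_tri X ->
  (X :&: T == set0) = ~~ (a \in X) && ~~ (b \in X).
Proof.
move=> eX; have e0 : even_on_tri set0 by rewrite /even_on_tri !inE.
rewrite -(set0I T) (sameP eqP (even_on_tri_traceP eX e0)) !inE.
by case: (a \in X); case: (b \in X).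
Qed.

Lemma card_even_on_tri_trace X : even_on_tri X -> X :&: T != set0 -> #|X :&: T| = 2.
Proof.
move=> eX; rewrite even_on_tri_trace_eq0 //.
have -> : X :&: T = [set x in [seq y <- [:: a; b; c] | y \in X]].
  by apply/setP => x; rewrite !inE mem_filter eT !inE orbA andbC.
rewrite cardsE (card_uniqP _) ?filter_uniq //=; last by rewrite !inE negb_or ab ac bc.
by rewrite eX; case: (a \in X); case: (b \in X).
Qed.

Lemma even_on_tri_trace_sub X Y : even_on_tri X -> even_on_tri Y ->
  X \subset Y -> X :&: T != set0 -> X :&: T = Y :&: T.
Proof.
move=> eX eY sXY nX; have nY : Y :&: T != set0.
  by apply: contraNneq nX => eY0; rewrite -subset0 -eY0 setSI.
apply/eqP; rewrite eqEcard setSI //=.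
by rewrite (card_even_on_tri_trace eX nX) (card_even_on_tri_trace eY nY).
Qed.

(* The traces on [T] of even sets form a 2-dimensional space over GF(2). *)
Lemma even_on_tri_trace_cases V W Z :
  even_on_tri V -> even_on_tri W -> even_on_tri Z ->
  W :&: T != set0 -> Z :&: T != set0 -> W :&: T != Z :&: T ->
  [\/ V :&: T = set0, V :&: T = W :&: T, V :&: T = Z :&: T |
       V :&: T = symdiff W Z :&: T].
Proof.
move=> eV eW eZ; have eWZ := even_on_tri_symdiff eW eZ.
rewrite !even_on_tri_trace_eq0 // (sameP eqP (even_on_tri_traceP eW eZ)).
move=> nW nZ nWZ.
case: (boolP (((a \in V) == (a \in W)) && ((b \in V) == (b \in W)))).
  by move/(even_on_tri_traceP eV eW); constructor 2.
case: (boolP (((a \in V) == (a \in Z)) && ((b \in V) == (b \in Z)))).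
  by move/(even_on_tri_traceP eV eZ); constructor 3.
case: (boolP (((a \in V) == (a \in symdiff W Z)) && ((b \in V) == (b \in symdiff W Z)))).
  by move/(even_on_tri_traceP eV eWZ); constructor 4.
move=> nVWZ nVZ nVW; constructor 1; apply/eqP; rewrite even_on_tri_trace_eq0 //.
by move: nW nZ nWZ nVWZ nVZ nVW; rewrite /symdiff !inE; case_mem.
Qed.
End TriangleTraces.

Section MinimalMemberTraces.
Variables (U : finType) (T : {set U}) (K : {set U} -> Prop).
Hypothesis KsD : forall X Y, K X -> K Y -> K (symdiff X Y).
Hypothesis KT : forall X, K X -> X \subset T -> X = set0.

Lemma setD_neq0_of_trace X : K X -> X :&: T != set0 -> exists2 z, z \in X & z \notin T.
Proof.
move=> KX nXT; have /subsetPn[z] : ~~ (X \subset T).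
  by apply: contra nXT => /(KT KX)->; rewrite set0I.
by exists z.
Qed.

Lemma eq_below_min_trace C G G' : min_nonempty K C -> C :&: T != set0 ->
  K G -> K G' -> G :\: T \subset C -> G' :\: T \subset C ->
  G :&: T = G' :&: T -> G = G'.
Proof.
move=> [KC nC minC] nCT KG KG' sGC sG'C eGT.
have KGG' := KsD KG KG'.
have sGG'C : symdiff G G' \subset C.
  apply/subsetP => z; move: (mem_set_eq z eGT) (subset_implyb z sGC) (subset_implyb z sG'C).
  by rewrite /symdiff !inE; case_mem.
have eGG'T : symdiff G G' :&: T = set0.
  by apply/setP => z; move: (mem_set_eq z eGT); rewrite /symdiff !inE; case_mem.
case: (eqVneq (symdiff G G') set0) => [e0|nGG'].
  by apply/setP => z; move: (mem_set_eq z e0); rewrite /symdiff !inE; case_mem.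
by move: nCT; rewrite -(minC _ KGG' nGG' sGG'C) eGG'T eqxx.
Qed.
End MinimalMemberTraces.

(* For the cocycle spaces [K1], [K2] of [M1], [M2], [glue T K1 K2] is the cocycle
   space of their 3-sum along [T] (see [coindep_three_sumP]). *)
Definition glue (U : finType) (T : {set U}) (K1 K2 : {set U} -> Prop) (X : {set U}) :=
  exists D1 D2, [/\ K1 D1, K2 D2, D1 :&: T = D2 :&: T & X = (D1 :|: D2) :\: T].

Lemma glue_sym (U : finType) T (K1 K2 : {set U} -> Prop) X :
  glue T K1 K2 X <-> glue T K2 K1 X.
Proof.
by split=> -[D1 [D2 [KD1 KD2 eD ->]]]; exists D2, D1; rewrite setUC; split.
Qed.

Lemma glue_disjoint (U : finType) T (K1 K2 : {set U} -> Prop) D :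
  K2 set0 -> K1 D -> D :&: T = set0 -> glue T K1 K2 D.
Proof.
move=> K2_0 KD eDT; exists D, set0; split; rewrite ?set0I ?setU0 //.
by apply/setP => z; move: (mem_set_eq z eDT); rewrite !inE; case_mem.
Qed.

Lemma min_glue_disjoint_member (U : finType) T (K1 K2 : {set U} -> Prop) C D :
  K2 set0 -> min_nonempty (glue T K1 K2) C -> K1 D ->
  D :&: T = set0 -> D != set0 -> D \subset C ->
  [/\ C = D, min_nonempty K1 C & [disjoint C & T]].
Proof.
move=> K2_0 [_ _ minC] KD eDT nD sDC.
have eDC := minC D (glue_disjoint K2_0 KD eDT) nD sDC; subst D.
split; rewrite // -?setI_eq0 ?eDT //; split=> // Y KY nY sYC.
apply: (minC _ _ nY sYC); apply: glue_disjoint K2_0 KY _.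
by apply/eqP; rewrite -subset0 -eDT setSI.
Qed.

Section Glue.
Variables (U : finType) (E1 E2 T : {set U}) (a b c : U) (K1 K2 : {set U} -> Prop).
Hypotheses (eE12 : E1 :&: E2 = T) (eT : T = [set a; b; c]).
Hypotheses (ab : a != b) (ac : a != c) (bc : b != c).
Hypotheses (K1_0 : K1 set0) (K1D : forall X Y, K1 X -> K1 Y -> K1 (symdiff X Y))
  (K1_sub : forall X, K1 X -> X \subset E1) (K1_even : forall X, K1 X -> even_on_tri a b c X)
  (K1_T : forall X, K1 X -> X \subset T -> X = set0).
Hypotheses (K2_0 : K2 set0) (K2D : forall X Y, K2 X -> K2 Y -> K2 (symdiff X Y))
  (K2_sub : forall X, K2 X -> X \subset E2) (K2_even : forall X, K2 X -> even_on_tri a b c X)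
  (K2_T : forall X, K2 X -> X \subset T -> X = set0).

Lemma mem_E12 z : (z \in E1) && (z \in E2) ==> (z \in T).
Proof. by rewrite -eE12 inE implybb. Qed.

Lemma symdiff_glue C1 C2 : K1 C1 -> K2 C2 -> C1 :&: T = C2 :&: T ->
  symdiff C1 C2 = (C1 :|: C2) :\: T.
Proof.
move=> KC1 KC2 eC12; apply/setP => z; move: (mem_set_eq z eC12) (mem_E12 z).
move: (subset_implyb z (K1_sub KC1)) (subset_implyb z (K2_sub KC2)).
by rewrite /symdiff !inE; case_mem.
Qed.

Lemma min_glue_cases C : min_nonempty (glue T K1 K2) C ->
  [\/ min_nonempty K1 C /\ [disjoint C & T],
      min_nonempty K2 C /\ [disjoint C & T] |
      exists C1 C2, [/\ min_nonempty K1 C1, min_nonempty K2 C2,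
        C1 :&: T = C2 :&: T, #|C1 :&: T| = 2 & C = symdiff C1 C2]].
Proof.
move=> minC; case: (minC) => -[D1 [D2 [KD1 KD2 eD eC]]] nC minC'.
have [eD1T|] := eqVneq (D1 :&: T) set0.
  have eD2T : D2 :&: T = set0 by rewrite -eD.
  have sDC D : D :&: T = set0 -> D \subset D1 :|: D2 -> D \subset C.
    move=> eDT /subsetP sD; apply/subsetP => z zD; rewrite eC in_setD (sD z zD) andbT.
    by move: (mem_set_eq z eDT); rewrite !inE zD /= => ->.
  have [eD1|nD1] := eqVneq D1 set0.
    have nD2 : D2 != set0 by apply: contraNneq nC => eD2; rewrite eC eD1 eD2 setU0 set0D.
    have minC2 : min_nonempty (glue T K2 K1) C.
      by apply: min_nonempty_equiv minC => X; apply: glue_sym.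
    have [] := min_glue_disjoint_member K1_0 minC2 KD2 eD2T nD2 (sDC _ eD2T (subsetUr _ _)).
    by constructor 2.
  have [] := min_glue_disjoint_member K2_0 minC KD1 eD1T nD1 (sDC _ eD1T (subsetUl _ _)).
  by constructor 1.
case/set0Pn => x /setIP[xD1 xT]; constructor 3.
have xD2 : x \in D2 by move: (mem_set_eq x eD); rewrite !inE xD1 xT !andbT => <-.
have [C1 [minC1 sC1D1 xC1]] := min_nonempty_cover K1D KD1 xD1.
have [C2 [minC2 sC2D2 xC2]] := min_nonempty_cover K2D KD2 xD2.
have [[KC1 _ _] [KC2 _ _]] := (minC1, minC2).
have nT (X : {set U}) : x \in X -> X :&: T != set0.
  by move=> xX; apply/set0Pn; exists x; rewrite inE xX.
have eC1 := even_on_tri_trace_sub eT ab ac bc (K1_even KC1) (K1_even KD1) sC1D1 (nT _ xC1).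
have eC2 := even_on_tri_trace_sub eT ab ac bc (K2_even KC2) (K2_even KD2) sC2D2 (nT _ xC2).
have eC12 : C1 :&: T = C2 :&: T by rewrite eC1 eD eC2.
exists C1, C2; split => //.
  exact: (card_even_on_tri_trace eT ab ac bc (K1_even KC1) (nT _ xC1)).
rewrite symdiff_glue //; apply/esym; apply: minC'; first by exists C1, C2.
  have /subsetPn[z zC1 zT] : ~~ (C1 \subset T).
    by apply/negP => /(K1_T KC1) eC1_0; move: xC1; rewrite eC1_0 inE.
  by apply/set0Pn; exists z; rewrite !inE zC1 zT.
apply/subsetP => z; move: (subset_implyb z sC1D1) (subset_implyb z sC2D2).
by rewrite eC !inE; case_mem.
Qed.

Lemma min_glue_disjoint C : min_nonempty K1 C -> [disjoint C & T] ->
  min_nonempty (glue T K1 K2) C.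
Proof.
move=> [KC nC minC]; rewrite -setI_eq0 => /eqP eCT.
split=> // [|_ [H1 [H2 [KH1 KH2 eH ->]]] nY sYC]; first exact: glue_disjoint.
have eH2 : H2 = set0.
  apply: (K2_T KH2); apply/subsetP => z zH2; move: (subset_implyb z sYC).
  move: (subset_implyb z (K1_sub KC)) (subset_implyb z (K2_sub KH2)) (mem_E12 z) zH2.
  by rewrite !inE; case_mem.
have eH1T : H1 :&: T = set0 by rewrite eH eH2 set0I.
have eY : (H1 :|: H2) :\: T = H1.
  by apply/setP => z; move: (mem_set_eq z eH1T); rewrite eH2 !inE; case_mem.
by rewrite eY in nY sYC *; apply: minC.
Qed.

Lemma glue_meets H1 H2 : K1 H1 -> K2 H2 -> H1 :&: T = H2 :&: T -> H1 :&: T != set0 ->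
  ((H1 :|: H2) :\: T) :&: E1 != set0 /\ ((H1 :|: H2) :\: T) :&: E2 != set0.
Proof.
move=> KH1 KH2 eH nH1; have nH2 : H2 :&: T != set0 by rewrite -eH.
have [z1 z1H z1T] := setD_neq0_of_trace K1_T KH1 nH1.
have [z2 z2H z2T] := setD_neq0_of_trace K2_T KH2 nH2.
split; apply/set0Pn; [exists z1 | exists z2]; rewrite !inE ?z1H ?z2H ?orbT ?z1T ?z2T /=.
  exact: subsetP (K1_sub KH1) z1 z1H.
exact: subsetP (K2_sub KH2) z2 z2H.
Qed.

Section SymdiffOfCocircuits.
Variables C1 C2 : {set U}.
Hypotheses (minC1 : min_nonempty K1 C1) (minC2 : min_nonempty K2 C2).
Hypotheses (eC12 : C1 :&: T = C2 :&: T) (nC1T : C1 :&: T != set0).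

Let KC1 : K1 C1. Proof. by case: minC1. Qed.
Let KC2 : K2 C2. Proof. by case: minC2. Qed.

Lemma glue_below_symdiff H1 H2 : K1 H1 -> K2 H2 ->
  (H1 :|: H2) :\: T \subset symdiff C1 C2 -> H1 :\: T \subset C1 /\ H2 :\: T \subset C2.
Proof.
rewrite symdiff_glue // => KH1 KH2 sH; split; apply/subsetP => z;
  move: (subset_implyb z sH) (subset_implyb z (K1_sub KH1)) (subset_implyb z (K2_sub KH2));
  move: (subset_implyb z (K1_sub KC1)) (subset_implyb z (K2_sub KC2)) (mem_E12 z);
  rewrite !inE; case_mem.
Qed.

Lemma glue_below_eq H1 H2 G1 G2 : K1 H1 -> K2 H2 -> H1 :&: T = H2 :&: T ->
  K1 G1 -> K2 G2 -> G1 :&: T = G2 :&: T ->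
  (H1 :|: H2) :\: T \subset symdiff C1 C2 -> (G1 :|: G2) :\: T \subset symdiff C1 C2 ->
  H1 :&: T = G1 :&: T -> H1 = G1 /\ H2 = G2.
Proof.
move=> KH1 KH2 eH KG1 KG2 eG sH sG eHG.
have [sH1 sH2] := glue_below_symdiff KH1 KH2 sH.
have [sG1 sG2] := glue_below_symdiff KG1 KG2 sG.
have nC2T : C2 :&: T != set0 by rewrite -eC12.
split; first exact: (eq_below_min_trace K1D minC1 nC1T KH1 KG1 sH1 sG1 eHG).
by apply: (eq_below_min_trace K2D minC2 nC2T KH2 KG2 sH2 sG2); rewrite -eH eHG -eG.
Qed.

Variables G1 G2 : {set U}.
Hypotheses (KG1 : K1 G1) (KG2 : K2 G2) (eG12 : G1 :&: T = G2 :&: T).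
Hypothesis sGS : (G1 :|: G2) :\: T \subset symdiff C1 C2.
Hypotheses (nG1T : G1 :&: T != set0) (neGC : G1 :&: T != C1 :&: T).

Let R := (G1 :|: G2) :\: T.
Let Q := (symdiff C1 G1 :|: symdiff C2 G2) :\: T.

Let sG1 : G1 :\: T \subset C1. Proof. by case: (glue_below_symdiff KG1 KG2 sGS). Qed.
Let sG2 : G2 :\: T \subset C2. Proof. by case: (glue_below_symdiff KG1 KG2 sGS). Qed.

Let eQT : symdiff C1 G1 :&: T = symdiff C2 G2 :&: T.
Proof.
by apply/setP => z; move: (mem_set_eq z eC12) (mem_set_eq z eG12); rewrite /symdiff !inE; case_mem.
Qed.

Lemma symdiff_split : symdiff C1 C2 = R :|: Q /\ [disjoint R & Q].
Proof.
rewrite -setI_eq0 (symdiff_glue KC1 KC2 eC12); split; [|apply/eqP]; apply/setP => z;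
  move: (subset_implyb z sG1) (subset_implyb z sG2) (mem_E12 z);
  move: (subset_implyb z (K1_sub KG1)) (subset_implyb z (K2_sub KG2));
  move: (subset_implyb z (K1_sub KC1)) (subset_implyb z (K2_sub KC2));
  rewrite /R /Q /symdiff !inE; case_mem.
Qed.

Lemma glue_below_cases Y : glue T K1 K2 Y -> Y \subset symdiff C1 C2 ->
  [\/ Y = set0, Y = symdiff C1 C2, Y = R | Y = Q].
Proof.
move=> [H1 [H2 [KH1 KH2 eH ->]]] sYS.
have [eS _] := symdiff_split.
have sQS : Q \subset symdiff C1 C2 by rewrite eS subsetUr.
have s0S : (set0 :|: set0) :\: T \subset symdiff C1 C2 by rewrite setU0 set0D sub0set.
have sCS : (C1 :|: C2) :\: T \subset symdiff C1 C2 by rewrite symdiff_glue.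
have below := glue_below_eq KH1 KH2 eH _ _ _ sYS.
case: (even_on_tri_trace_cases eT (K1_even KH1) (K1_even KC1) (K1_even KG1) nC1T nG1T).
- by rewrite eq_sym.
- move=> eH1T; have [-> ->] := below _ _ K1_0 K2_0 (erefl _) s0S (etrans eH1T (esym (set0I T))).
  by constructor 1; rewrite setU0 set0D.
- by move=> /(below _ _ KC1 KC2 eC12 sCS)[-> ->]; constructor 2; rewrite symdiff_glue.
- by move=> /(below _ _ KG1 KG2 eG12 sGS)[-> ->]; constructor 3.
by move=> /(below _ _ (K1D KC1 KG1) (K2D KC2 KG2) eQT sQS)[-> ->]; constructor 4.
Qed.

Lemma glue_parts_meet :
  [/\ R :&: E1 != set0, R :&: E2 != set0, Q :&: E1 != set0 & Q :&: E2 != set0].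
Proof.
have nQ1T : symdiff C1 G1 :&: T != set0.
  apply: contraNneq neGC => eQ0; apply/eqP/setP => z; move: (mem_set_eq z eQ0).
  by rewrite /symdiff !inE; case_mem.
have [mR1 mR2] := glue_meets KG1 KG2 eG12 nG1T.
by have [mQ1 mQ2] := glue_meets (K1D KC1 KG1) (K2D KC2 KG2) eQT nQ1T.
Qed.

Lemma min_glue_parts : min_nonempty (glue T K1 K2) R /\ min_nonempty (glue T K1 K2) Q.
Proof.
have [eS dRQ] := symdiff_split.
have [/set0Pn[r /setIP[rR _]] _ /set0Pn[q /setIP[qQ _]] _] := glue_parts_meet.
have sub_disj_eq0 (Y Z : {set U}) : Y \subset Z -> [disjoint Y & Z] -> Y = set0.
  by move=> sYZ; rewrite -setI_eq0 (setIidPl sYZ) => /eqP.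
have [sRS sQS] : R \subset symdiff C1 C2 /\ Q \subset symdiff C1 C2 by rewrite eS subsetUl subsetUr.
have gR : glue T K1 K2 R by exists G1, G2.
have gQ : glue T K1 K2 Q by exists (symdiff C1 G1), (symdiff C2 G2); split; auto.
have [nR nQ] : R != set0 /\ Q != set0 by split; apply/set0Pn; [exists r | exists q].
split; split=> // Y gY nY.
  move=> sYR; case: (glue_below_cases gY (subset_trans sYR sRS)) => // eY; subst Y.
  - by rewrite eqxx in nY.
  - by case/eqP: nQ; apply: sub_disj_eq0 (subset_trans sQS sYR) _; rewrite disjoint_sym.
  - by case/eqP: nQ; apply: sub_disj_eq0 sYR _; rewrite disjoint_sym.
move=> sYQ; case: (glue_below_cases gY (subset_trans sYQ sQS)) => // eY; subst Y.
- by rewrite eqxx in nY.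
- by case/eqP: nR; apply: sub_disj_eq0 (subset_trans sRS sYQ) dRQ.
- by case/eqP: nR; apply: sub_disj_eq0 sYQ dRQ.
Qed.
End SymdiffOfCocircuits.

Lemma min_glue_symdiff C1 C2 : min_nonempty K1 C1 -> min_nonempty K2 C2 ->
  C1 :&: T = C2 :&: T -> #|C1 :&: T| = 2 ->
  min_nonempty (glue T K1 K2) (symdiff C1 C2) \/
  exists R Q, [/\ min_nonempty (glue T K1 K2) R, min_nonempty (glue T K1 K2) Q,
    [disjoint R & Q], symdiff C1 C2 = R :|: Q &
    [/\ R :&: E1 != set0, R :&: E2 != set0, Q :&: E1 != set0 & Q :&: E2 != set0]].
Proof.
move=> minC1 minC2 eC12 cardC1T; have [[KC1 _ _] [KC2 _ _]] := (minC1, minC2).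
have nC1T : C1 :&: T != set0 by rewrite -card_gt0 cardC1T.
have eS := symdiff_glue KC1 KC2 eC12.
have gS : glue T K1 K2 (symdiff C1 C2) by exists C1, C2.
have nS : symdiff C1 C2 != set0.
  apply: contraNneq (proj1 (glue_meets KC1 KC2 eC12 nC1T)) => eS0.
  by rewrite -eS eS0 set0I.
case: (classic (min_nonempty (glue T K1 K2) (symdiff C1 C2))) => [|notmin]; [by left | right].
have [_ [[G1 [G2 [KG1 KG2 eG12 ->]]] nR ltRS]] := not_min_nonempty gS nS notmin.
have sRS := proper_sub ltRS.
have below := glue_below_eq minC1 minC2 eC12 nC1T KG1 KG2 eG12.
have nG1T : G1 :&: T != set0.
  apply: contraNneq nR => eG1T.
  have [] := below set0 set0 K1_0 K2_0 (erefl _) sRS; rewrite ?setU0 ?set0D ?sub0set ?set0I //.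
  by move=> -> ->; rewrite setU0 set0D.
have neGC : G1 :&: T != C1 :&: T.
  apply: contraNneq (proper_neq ltRS) => eGC.
  by have [] := below C1 C2 KC1 KC2 eC12 sRS; rewrite ?eS // => -> ->.
have [eSRQ dRQ] := symdiff_split minC1 minC2 eC12 KG1 KG2 sRS.
have [minR minQ] := min_glue_parts minC1 minC2 eC12 nC1T KG1 KG2 eG12 sRS nG1T neGC.
have meet := glue_parts_meet minC1 minC2 eC12 KG1 KG2 eG12 nG1T neGC.
by eexists _, _; split; [exact: minR | exact: minQ | exact: dRQ | exact: eSRQ | exact: meet].
Qed.
End Glue.

Section ThreeSum.
Variables (U : finType) (M1 M2 P : matroid U) (T : {set U}).
Variables (n1 n2 : nat) (f1 : U -> 'rV['F_2]_n1) (f2 : U -> 'rV['F_2]_n2).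
Hypothesis reprM1 : forall X, indep M1 X = (X \subset ground M1) && free [seq f1 x | x <- enum X].
Hypothesis reprM2 : forall X, indep M2 X = (X \subset ground M2) && free [seq f2 x | x <- enum X].
Hypotheses (eE12 : ground M1 :&: ground M2 = T) (triT1 : triangle M1 T) (triT2 : triangle M2 T).
Hypothesis noCT1 : forall C, cocircuit M1 C -> ~~ (C \subset T).
Hypothesis noCT2 : forall C, cocircuit M2 C -> ~~ (C \subset T).
Hypotheses (groundP : ground P = ground M1 :|: ground M2)
  (flatP : forall F, flat P F <->
    [/\ F \subset ground M1 :|: ground M2, flat M1 (F :&: ground M1) & flat M2 (F :&: ground M2)]).

Local Notation K1 := (cocycle M1 f1).
Local Notation K2 := (cocycle M2 f2).

Let sTE1 : T \subset ground M1. Proof. by case/andP: triT1 => /and3P[]. Qed.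
Let sTE2 : T \subset ground M2. Proof. by case/andP: triT2 => /and3P[]. Qed.

Let K1_T X : K1 X -> X \subset T -> X = set0.
Proof. exact: (cocycle_sub_eq0 reprM1 noCT1). Qed.

Lemma flatP_eq_ground F : flat P F -> ground P :\: T \subset F -> F = ground P.
Proof.
move=> /flatP[sFE flatF1 flatF2] sF.
have sF' (E : {set U}) : E \subset ground P -> E :\: T \subset F :&: E.
  by move=> sEP; rewrite subsetI subsetDl (subset_trans _ sF) ?setSD.
have /setIidPr sE1F : F :&: ground M1 = ground M1.
  by apply: (flat_eq_ground reprM1 noCT1 flatF1); apply: sF'; rewrite groundP subsetUl.
have /setIidPr sE2F : F :&: ground M2 = ground M2.
  by apply: (flat_eq_ground reprM2 noCT2 flatF2); apply: sF'; rewrite groundP subsetUr.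
by apply/eqP; rewrite eqEsubset groundP sFE subUset sE1F sE2F.
Qed.

Lemma glue_sub D : glue T K1 K2 D -> D \subset ground P :\: T.
Proof.
move=> [D1 [D2 [KD1 KD2 _ ->]]]; rewrite groundP setSD // setUSS //.
  exact: cocycle_sub KD1.
exact: cocycle_sub KD2.
Qed.

Lemma flat_setD_glue D1 D2 : K1 D1 -> K2 D2 -> D1 :&: T = D2 :&: T ->
  flat P ((ground M1 :\: D1) :|: (ground M2 :\: D2)).
Proof.
move=> [w1 eD1] [w2 eD2] eD; apply/flatP; split; first by rewrite setUSS ?subsetDl.
  suff -> : (ground M1 :\: D1 :|: ground M2 :\: D2) :&: ground M1 = ground M1 :\: D1.
    by rewrite eD1 flat_setD_cocyc.
  apply/setP => z; move: (mem_set_eq z eD) (mem_E12 eE12 z).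
  move: (subset_implyb z (cocycle_sub (ex_intro _ w2 eD2))).
  by rewrite !inE; case_mem.
suff -> : (ground M1 :\: D1 :|: ground M2 :\: D2) :&: ground M2 = ground M2 :\: D2.
  by rewrite eD2 flat_setD_cocyc.
apply/setP => z; move: (mem_set_eq z eD) (mem_E12 eE12 z).
move: (subset_implyb z (cocycle_sub (ex_intro _ w1 eD1))).
by rewrite !inE; case_mem.
Qed.

Lemma flat_glue_sep2 F x y z : flat P F -> T = [set x; y; z] ->
  x != y -> x != z -> y != z -> x \notin F -> y \notin F ->
  exists D, [/\ glue T K1 K2 D, D != set0 & [disjoint D & F]].
Proof.
move=> /flatP[_ flatF1 flatF2] eT xy xz yz xF yF.
have eT' : T = [set x; z; y].
  by rewrite eT; apply/setP => t; rewrite !inE -!orbA (orbC (t == y)).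
have zy : z != y by rewrite eq_sym.
have [xT yT] : x \in T /\ y \in T by rewrite eT !inE !eqxx ?orbT.
have [x1 y1] : x \in ground M1 /\ y \in ground M1 by rewrite !(subsetP sTE1).
have [x2 y2] : x \in ground M2 /\ y \in ground M2 by rewrite !(subsetP sTE2).
have notinFE (E : {set U}) t : t \notin F -> t \notin F :&: E by rewrite inE => /negbTE->.
have [D1 [KD1 xD1 yD1 zD1 sD1]] := flat_cocycle_sep2 reprM1 flatF1 x1 y1 (notinFE _ _ xF)
  (notinFE _ _ yF) (triangle_addv reprM1 triT1 eT' xz xy zy).
have [D2 [KD2 xD2 yD2 zD2 sD2]] := flat_cocycle_sep2 reprM2 flatF2 x2 y2 (notinFE _ _ xF)
  (notinFE _ _ yF) (triangle_addv reprM2 triT2 eT' xz xy zy).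
have eD : D1 :&: T = D2 :&: T.
  apply/setP => t; rewrite !inE eT !inE.
  case: (eqVneq t x) => [->|_]; first by rewrite xD1 xD2.
  case: (eqVneq t y) => [->|_]; first by rewrite yD1 yD2.
  by case: (eqVneq t z) => [->|_]; rewrite ?(negbTE zD1) ?(negbTE zD2) ?andbF.
exists ((D1 :|: D2) :\: T); split; first by exists D1, D2.
  have [|t tD1 tT] := setD_neq0_of_trace K1_T KD1; first by apply/set0Pn; exists x; rewrite inE xD1.
  by apply/set0Pn; exists t; rewrite !inE tD1 tT.
rewrite -setI_eq0; apply/eqP/setP => t; move: (subset_implyb t sD1) (subset_implyb t sD2).
by rewrite !inE; case_mem.
Qed.

Lemma flat_glue_sep_supT F : flat P F -> F != ground P -> T \subset F ->
  exists D, [/\ glue T K1 K2 D, D != set0 & [disjoint D & F]].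
Proof.
move=> /flatP[sFE flatF1 flatF2] nFE sTF.
have notinFE (E : {set U}) t : t \notin F -> t \notin F :&: E by rewrite inE => /negbTE->.
have disjF (D E : {set U}) : D \subset E :\: (F :&: E) -> [disjoint D & F] /\ D :&: T = set0.
  move=> sD; rewrite -setI_eq0; split; [apply/eqP|]; apply/setP => t; move: (subset_implyb t sD).
    by rewrite !inE; case_mem.
  by move: (subset_implyb t sTF); rewrite !inE; case_mem.
have /subsetPn[e] : ~~ (ground P \subset F).
  by apply: contra nFE => sEF; rewrite eqEsubset sEF groundP sFE.
rewrite groundP inE => /orP[eE|eE] eF.
  have [D [KD eD /disjF[dDF eDT]]] := flat_cocycle_sep reprM1 flatF1 eE (notinFE _ _ eF).
  exists D; split => //; last by apply/set0Pn; exists e.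
  exact: glue_disjoint (cocycle0 M2 f2) KD eDT.
have [D [KD eD /disjF[dDF eDT]]] := flat_cocycle_sep reprM2 flatF2 eE (notinFE _ _ eF).
exists D; split => //; last by apply/set0Pn; exists e.
by apply/glue_sym; exact: glue_disjoint (cocycle0 M1 f1) KD eDT.
Qed.

Lemma flat_glue_sep F : flat P F -> F != ground P ->
  exists D, [/\ glue T K1 K2 D, D != set0 & [disjoint D & F]].
Proof.
move=> flatF nFE; have /flatP[_ flatF1 _] := flatF.
have [|/subsetPn[x xT xF]] := boolP (T \subset F); first exact: flat_glue_sep_supT.
have [p [q [eT xp xq pq]]] := card3_split (eqP (proj2 (andP triT1))) xT.
have [pT qT] : p \in T /\ q \in T by rewrite eT !inE !eqxx ?orbT.
have [pF|pF] := boolP (p \in F); last exact: flat_glue_sep2 flatF eT xp xq pq xF pF.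
have qF : q \notin F.
  apply: contra xF => qF; have eT' : T = [set p; q; x].
    by rewrite eT; apply/setP => t; rewrite !inE -orbA orbC.
  have inFE1 t : t \in T -> t \in F -> t \in F :&: ground M1.
    by move=> tT tF; rewrite inE tF (subsetP sTE1).
  have [px qx] : p != x /\ q != x by rewrite !(eq_sym _ x).
  have := flat_addv_closed reprM1 flatF1 (inFE1 _ pT pF) (inFE1 _ qT qF) (subsetP sTE1 x xT).
  by rewrite inE => /(_ (triangle_addv reprM1 triT1 eT' pq px qx))/andP[].
have eT' : T = [set x; q; p].
  by rewrite eT; apply/setP => t; rewrite !inE -!orbA (orbC (t == p)).
by apply: flat_glue_sep2 flatF eT' xq xp _ xF qF; rewrite eq_sym.
Qed.

Lemma coindep_three_sumP (X : {set U}) : X \subset ground P :\: T ->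
  coindep (three_sum P T) X <-> ~ exists D, [/\ glue T K1 K2 D, D != set0 & D \subset X].
Proof.
move=> sX; rewrite /three_sum coindep_deleteP //; last exact: flatP_eq_ground.
split=> [coindepX [D [gD /set0Pn[z zD] sDX]]|noD F flatF sF].
  case: gD zD sDX => D1 [D2 [KD1 KD2 eD ->]] zD sDX.
  have [sD1 sD2] := (cocycle_sub KD1, cocycle_sub KD2).
  have sF : (ground P :\: T) :\: X \subset (ground M1 :\: D1) :|: (ground M2 :\: D2).
    apply/subsetP => t; move: (subset_implyb t sDX) (subset_implyb t sD1) (subset_implyb t sD2).
    by rewrite groundP !inE; case_mem.
  move: (coindepX _ (flat_setD_glue KD1 KD2 eD) sF) => /setP/(_ z).
  move: zD (subset_implyb z sD1) (subset_implyb z sD2) (mem_E12 eE12 z).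
  by rewrite groundP !inE; case_mem.
apply: NNPP => neFE; have [D [gD nD dDF]] := flat_glue_sep flatF (introN eqP neFE).
apply: noD; exists D; split => //; apply/subsetP => t tD.
move: (subset_implyb t (glue_sub gD)) (subset_implyb t sF); rewrite -setI_eq0 in dDF.
by move: (mem_set_eq t (eqP dDF)) tD; rewrite !inE; case_mem.
Qed.

Lemma cocircuit_three_sum C :
  cocircuit (three_sum P T) C <-> min_nonempty (glue T K1 K2) C.
Proof.
by apply: cocircuit_min_nonempty => [D /glue_sub|X /coindep_three_sumP].
Qed.

Variables a b c : U.
Hypotheses (eT : T = [set a; b; c]) (ab : a != b) (ac : a != c) (bc : b != c).

Let K2_T X : K2 X -> X \subset T -> X = set0.
Proof. exact: (cocycle_sub_eq0 reprM2 noCT2). Qed.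
Let K1_even X : K1 X -> even_on_tri a b c X.
Proof. exact: (cocycle_triangle reprM1 triT1 eT ab ac bc). Qed.
Let K2_even X : K2 X -> even_on_tri a b c X.
Proof. exact: (cocycle_triangle reprM2 triT2 eT ab ac bc). Qed.
Let K1_0 := cocycle0 M1 f1.
Let K2_0 := cocycle0 M2 f2.
Let K1D := @cocycleD _ M1 _ f1.
Let K2D := @cocycleD _ M2 _ f2.
Let K1_sub := @cocycle_sub _ M1 _ f1.
Let K2_sub := @cocycle_sub _ M2 _ f2.

Lemma three_sum_cocircuit_cases C : cocircuit (three_sum P T) C ->
  [\/ cocircuit M1 C /\ [disjoint C & T], cocircuit M2 C /\ [disjoint C & T] |
      exists C1 C2, [/\ cocircuit M1 C1, cocircuit M2 C2,
        C1 :&: T = C2 :&: T, #|C1 :&: T| = 2 & C = symdiff C1 C2]].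
Proof.
move=> /cocircuit_three_sum.
case/(min_glue_cases eE12 eT ab ac bc K1_0 K1D K1_sub K1_even K1_T K2_0 K2D K2_sub K2_even).
- by rewrite -cocircuit_min_cocycle //; constructor 1.
- by rewrite -cocircuit_min_cocycle //; constructor 2.
move=> [C1 [C2 [minC1 minC2 eC12 cardC1T eC]]]; constructor 3.
exists C1, C2; split => //; exact/cocircuit_min_cocycle.
Qed.

Lemma three_sum_cocircuit_disjoint C : cocircuit M1 C \/ cocircuit M2 C ->
  [disjoint C & T] -> cocircuit (three_sum P T) C.
Proof.
move=> [/(cocircuit_min_cocycle reprM1)|/(cocircuit_min_cocycle reprM2)] minC dCT.
  by apply/cocircuit_three_sum; apply: (min_glue_disjoint eE12 K1_sub K2_0 K2_sub K2_T minC).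
have eE21 : ground M2 :&: ground M1 = T by rewrite setIC.
apply/cocircuit_three_sum/(min_nonempty_equiv (glue_sym _ _ _)).
exact: (min_glue_disjoint eE21 K2_sub K1_0 K1_sub K1_T minC).
Qed.

Lemma three_sum_cocircuit_symdiff C1 C2 : cocircuit M1 C1 -> cocircuit M2 C2 ->
  C1 :&: T = C2 :&: T -> #|C1 :&: T| = 2 ->
  cocircuit (three_sum P T) (symdiff C1 C2) \/
  exists R Q, [/\ cocircuit (three_sum P T) R, cocircuit (three_sum P T) Q,
    [disjoint R & Q], symdiff C1 C2 = R :|: Q &
    [/\ R :&: ground M1 != set0, R :&: ground M2 != set0,
        Q :&: ground M1 != set0 & Q :&: ground M2 != set0]].
Proof.
move=> /(cocircuit_min_cocycle reprM1) minC1 /(cocircuit_min_cocycle reprM2) minC2 eC12 cardC1T.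
have := min_glue_symdiff eE12 eT K1_0 K1D K1_sub K1_even K1_T K2_0 K2D K2_sub K2_T
  minC1 minC2 eC12 cardC1T.
case=> [/cocircuit_three_sum|[R [Q [minR minQ dRQ eRQ meets]]]]; [by left | right].
by exists R, Q; split=> //; exact/cocircuit_three_sum.
Qed.
End ThreeSum.

Theorem corollary3p6 (U : finType) (M1 M2 : matroid U) (T : {set U}) :
  binary M1 -> binary M2 ->
  ground M1 :&: ground M2 = T ->
  triangle M1 T -> triangle M2 T ->
  (forall C, cocircuit M1 C -> ~~ (C \subset T)) ->
  (forall C, cocircuit M2 C -> ~~ (C \subset T)) ->
  forall P : matroid U, is_gen_par_conn M1 M2 T P ->
  let M := three_sum P T in
  (* (i) *)
  (forall C, cocircuit M C ->
     (cocircuit M1 C /\ [disjoint C & T]) \/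
     (cocircuit M2 C /\ [disjoint C & T]) \/
     (exists C1 C2, [/\ cocircuit M1 C1, cocircuit M2 C2,
                       C1 :&: T = C2 :&: T, #|C1 :&: T| = 2 &
                       C = symdiff C1 C2])) /\
  (* (ii) *)
  (forall C, (cocircuit M1 C \/ cocircuit M2 C) -> [disjoint C & T] ->
     cocircuit M C) /\
  (forall C1 C2, cocircuit M1 C1 -> cocircuit M2 C2 ->
     C1 :&: T = C2 :&: T -> #|C1 :&: T| = 2 ->
     cocircuit M (symdiff C1 C2) \/
     (exists R Q, [/\ cocircuit M R, cocircuit M Q, [disjoint R & Q],
                     symdiff C1 C2 = R :|: Q &
                     [/\ R :&: ground M1 != set0, R :&: ground M2 != set0,
                         Q :&: ground M1 != set0 & Q :&: ground M2 != set0]])).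
Proof.
move=> [n1 [f1 reprM1]] [n2 [f2 reprM2]] eE12 triT1 triT2 noCT1 noCT2 P [groundP flatP] M.
have cardT : #|T| = 3 := eqP (proj2 (andP triT1)).
have [a aT] : exists a, a \in T by apply/card_gt0P; rewrite cardT.
have [b [c [eT ab ac bc]]] := card3_split cardT aT.
split; [|split].
- move=> C /(three_sum_cocircuit_cases reprM1 reprM2 eE12 triT1 triT2 noCT1 noCT2 groundP flatP
    eT ab ac bc) [?|?|?]; by [left | right; left | right; right].
- exact: (three_sum_cocircuit_disjoint reprM1 reprM2 eE12 triT1 triT2 noCT1 noCT2 groundP flatP).
exact: (three_sum_cocircuit_symdiff reprM1 reprM2 eE12 triT1 triT2 noCT1 noCT2 groundP flatP
  eT ab ac bc).
Qed.
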